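(* Let $(\alpha,\omega,\beta)$ be a feasible endpoint constraint and let $\mathcal{O}(\alpha,\omega,\beta)$ be the set of valid occupancy functions $\gamma$ on $[0,\beta]$ with $\gamma(0)=\alpha$ and $\gamma(\beta)=\omega$. Then (a) $\mathcal{O}(\alpha,\omega,\beta)$ is a convex set, and (b) $J$ restricted to $\mathcal{O}(\alpha,\omega,\beta)$ is a convex function.
   Context: Fix $I\ge0$, $\beta>0$, $S_I=\{\gamma\in\mathbb{R}^{I+2}:\gamma_j\ge0,\sum_{j=0}^{I+1}\gamma_j=1\}$ (components $0,\dots,I,I+$), $\alpha,\omega\in S_I$. A valid occupancy function on $[0,\beta]$ is an absolutely continuous $\gamma:[0,\beta]\to S_I$ whose rate $\theta$, defined by $\dot\gamma_0=-\theta_0$, $\dot\gamma_j=\theta_{j-1}-\theta_j$ ($1\le j\le I$), $\dot\gamma_{I+}=\theta_I$, $\sum_j\theta_j=1$, lies in $S_I$ a.e. Feasible means at least one such $\gamma$ joins $\alpha$ to $\omega$. $J(\gamma)=\int_0^\beta D(\theta(x)\|\gamma(x))dx$ where $D(\theta\|\gamma)=\sum_i\theta_i\log(\theta_i/\gamma_i)$ is relative entropy ($0\log0=0$, $\theta\log(\theta/0)=\infty$ for $\theta>0$); $J$ takes values in $[0,\infty]$. *)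

From HB Require Import structures.
From mathcomp Require Import all_boot all_order all_algebra.
From mathcomp Require Import all_classical all_reals all_analysis.
Set Implicit Arguments. Unset Strict Implicit. Unset Printing Implicit Defensive.
Import Order.TTheory GRing.Theory Num.Theory.
Import numFieldNormedType.Exports.
Local Open Scope classical_set_scope.
Local Open Scope ring_scope.

Section Defs.
Variable R : realType.
Variable I : nat.

(* Components are indexed by 'I_(I+2): index j <= I is component j, and
   index I+1 (= ord_max) is the component "I+". *)
Definition simplex (g : 'I_I.+2 -> R) : Prop :=
  (forall j, 0 <= g j) /\ \sum_(j < I.+2) g j = 1.

Definition abs_cont_on (a b : R) (f : R -> R) : Prop :=
  forall eps : R, 0 < eps -> exists2 delta : R, 0 < delta &
    forall (n : nat) (u v : 'I_n -> R),
      (forall k, a <= u k /\ u k <= v k /\ v k <= b) ->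
      (forall k l, k != l -> v k <= u l \/ v l <= u k) ->
      \sum_(k < n) (v k - u k) < delta ->
      \sum_(k < n) `|f (v k) - f (u k)| < eps.

(* theta_n = - (gamma_0' + ... + gamma_n'), the unique solution of
   theta_0 = - gamma_0', theta_j = theta_(j-1) - gamma_j'. *)
Definition theta_nat (gam : R -> 'I_I.+2 -> R) (x : R) (n : nat) : R :=
  - \sum_(k < I.+2 | (k <= n)%N) derive1 (fun y => gam y k) x.

(* The rate theta(x) in R^(I+2): components 0..I from the ODE relations,
   component I+ fixed by sum_j theta_j = 1. *)
Definition rate (gam : R -> 'I_I.+2 -> R) (x : R) : 'I_I.+2 -> R :=
  fun j => if (j <= I)%N then theta_nat gam x j
           else 1 - \sum_(k < I.+1) theta_nat gam x k.

Definition valid_occupancy (beta : R) (gam : R -> 'I_I.+2 -> R) : Prop :=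
  (forall j, abs_cont_on 0 beta (fun y => gam y j)) /\
  (forall x, x \in `[0, beta] -> simplex (gam x)) /\
  {ae (@lebesgue_measure R), forall x, x \in `[0, beta] ->
     (forall j, derivable (fun y => gam y j) x 1) /\
     derive1 (fun y => gam y ord_max) x = rate gam x (inord I) /\
     simplex (rate gam x)}.

Definition occ_set (alpha omega : 'I_I.+2 -> R) (beta : R)
    (gam : R -> 'I_I.+2 -> R) : Prop :=
  valid_occupancy beta gam /\ gam 0 = alpha /\ gam beta = omega.

Definition feasible (alpha omega : 'I_I.+2 -> R) (beta : R) : Prop :=
  exists gam, occ_set alpha omega beta gam.

Definition xlogxy (t g : R) : \bar R :=
  if t == 0 then 0%E else if g == 0 then +oo%E else (t * ln (t / g))%:E.

Definition relent (th g : 'I_I.+2 -> R) : \bar R :=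
  (\sum_(j < I.+2) xlogxy (th j) (g j))%E.

Definition Jcost (beta : R) (gam : R -> 'I_I.+2 -> R) : \bar R :=
  (\int[@lebesgue_measure R]_(x in `[0%R, beta]) relent (rate gam x) (gam x))%E.

Definition comb (t : R) (g1 g2 : R -> 'I_I.+2 -> R) : R -> 'I_I.+2 -> R :=
  fun x j => t * g1 x j + (1 - t) * g2 x j.

End Defs.

From HB Require Import structures.
From mathcomp Require Import all_boot all_order all_algebra.
From mathcomp Require Import all_classical all_reals all_analysis.
From mathcomp Require Import ring lra measurable_realfun.
Set Implicit Arguments. Unset Strict Implicit. Unset Printing Implicit Defensive.
Import Order.TTheory GRing.Theory Num.Theory.
Import numFieldNormedType.Exports.
Local Open Scope classical_set_scope.
Local Open Scope ring_scope.

(* Convexity of O(alpha, omega, beta) is a direct check: absolute continuity,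
   the simplex constraints and the endpoint values are preserved by convex
   combinations, and the rate is linear in the occupancy function, so the
   ODE constraint is preserved as well.

   For J, the integrand (theta, gamma) |-> D(theta || gamma) is jointly convex,
   because (p, q) |-> p log(p / q) is positively homogeneous and subadditive
   (the log-sum inequality).  To integrate this pointwise inequality we discard
   a null set outside of which all occupancy functions involved are
   differentiable; there the integrands are measurable, since an absolutely
   continuous function is continuous and its derivative is a pointwise limit
   of difference quotients. *)

Section convex_combination.
Variable R : realType.
Implicit Types (f g : R -> R) (a b t x : R).

Lemma derivable_comb f g x t : derivable f x 1 -> derivable g x 1 ->
  derivable (fun y => t * f y + (1 - t) * g y) x 1.
Proof. by move=> df dg; apply: derivableD; apply: derivableZ. Qed.

Lemma derive1_comb f g x t : derivable f x 1 -> derivable g x 1 ->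
  derive1 (fun y => t * f y + (1 - t) * g y) x =
  t * derive1 f x + (1 - t) * derive1 g x.
Proof.
move=> /derivableP df /derivableP dg; rewrite !derive1E.
have dcomb := is_deriveD (is_deriveZ t df) (is_deriveZ (1 - t) dg).
exact: (@derive_val _ _ _ _ _ _ _ dcomb).
Qed.

Lemma norm_comb_le a b t : 0 <= t <= 1 ->
  `|t * a + (1 - t) * b| <= `|a| + `|b|.
Proof.
move=> /andP[t0 t1]; apply: (le_trans (ler_normD _ _)).
have t1' : 0 <= 1 - t by rewrite subr_ge0.
rewrite !normrM (ger0_norm t0) (ger0_norm t1').
by apply: lerD; rewrite ler_piMl // gerBl.
Qed.

Lemma abs_cont_on_comb a b f g t : 0 <= t <= 1 ->
  abs_cont_on a b f -> abs_cont_on a b g ->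
  abs_cont_on a b (fun y => t * f y + (1 - t) * g y).
Proof.
move=> t01 acf acg e e0.
have [df df0 Hf] := acf _ (divr_gt0 e0 (ltr0Sn _ 1)).
have [dg dg0 Hg] := acg _ (divr_gt0 e0 (ltr0Sn _ 1)).
exists (Num.min df dg) => [|n u v uv disj small]; first by rewrite lt_min df0 dg0.
have [mf mg] : Num.min df dg <= df /\ Num.min df dg <= dg.
  by rewrite !ge_min !lexx orbT.
have sf := Hf n u v uv disj (lt_le_trans small mf).
have sg := Hg n u v uv disj (lt_le_trans small mg).
rewrite [e]splitr; apply: le_lt_trans (ltrD sf sg); rewrite -big_split /=.
apply: ler_sum => k _.
have -> : t * f (v k) + (1 - t) * g (v k) - (t * f (u k) + (1 - t) * g (u k))
  = t * (f (v k) - f (u k)) + (1 - t) * (g (v k) - g (u k)) by ring.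
exact: norm_comb_le.
Qed.
End convex_combination.

Section entropy.
Variable R : realType.
Implicit Types (a b c d p x w : R).

Lemma sub_le_mul_ln_div x w : 0 < x -> 0 < w -> x - w <= x * ln (x / w).
Proof.
move=> x0 w0.
have wx0 : 0 < w / x by rewrite divr_gt0.
have : ln (w / x) <= w / x - 1.
  by rewrite -[X in ln X](subrK 1) addrC le_ln1Dx // ltrBrDl subrr.
rewrite -[x / w]invf_div lnV ?posrE // => le_ln.
have -> : x - w = x * (1 - w / x) by field; rewrite gt_eqF.
by rewrite ler_pM2l // lerNr opprB.
Qed.

Lemma log_sum_ineq a b c d : 0 < a -> 0 < b -> 0 < c -> 0 < d ->
  (a + c) * ln ((a + c) / (b + d)) <= a * ln (a / b) + c * ln (c / d).
Proof.
move=> a0 b0 c0 d0.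
set s := (a + c) / (b + d).
have s0 : 0 < s by rewrite divr_gt0 // addr_gt0.
have bound x w : 0 < x -> 0 < w -> x * ln s + x - w * s <= x * ln (x / w).
  move=> x0 w0; have := sub_le_mul_ln_div x0 (mulr_gt0 w0 s0).
  have -> : x / (w * s) = x / w / s by rewrite invfM mulrA.
  rewrite ln_div ?posrE ?divr_gt0 //; nra.
(* Both bounds are taken at the common ratio [s], so they add up to the
   left-hand side. *)
have bds : (b + d) * s = a + c by rewrite /s; field; rewrite gt_eqF // addr_gt0.
have := bound a b a0 b0; have := bound c d c0 d0; nra.
Qed.

Lemma xlogxy_gtNy a b : (-oo < xlogxy a b)%E.
Proof. by rewrite /xlogxy; case: ifP => _; [|case: ifP => _]; rewrite ?ltNyr. Qed.

Lemma xlogxy_ge_sub a b : 0 <= b -> ((a - b)%:E <= xlogxy a b)%E.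
Proof.
move=> b0; rewrite /xlogxy.
have [->|a_neq0] := eqVneq a 0; first by rewrite lee_fin sub0r oppr_le0.
have [->|b_neq0] := eqVneq b 0; first exact: leey.
have b_gt0 : 0 < b by rewrite lt_def b_neq0.
rewrite lee_fin; have [a_lt0|a_ge0] := ltP a 0.
  (* [ln] vanishes on nonpositive reals. *)
  have ab_le0 : a / b <= 0 by rewrite pmulr_lle0 ?invr_gt0 // ltW.
  by rewrite ln0 // mulr0 subr_le0 ltW // (lt_trans a_lt0).
by apply: sub_le_mul_ln_div; rewrite // lt_def a_neq0.
Qed.

Lemma xlogxy_scale p a b : 0 <= p ->
  xlogxy (p * a) (p * b) = (p%:E * xlogxy a b)%E.
Proof.
rewrite le_eqVlt => /predU1P[<-|p_gt0]; first by rewrite !mul0r /xlogxy eqxx mul0e.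
rewrite /xlogxy !mulf_eq0 (gt_eqF p_gt0) /=.
have [_|a_neq0] := eqVneq a 0; first by rewrite mule0.
have [_|b_neq0] := eqVneq b 0; first by rewrite gt0_muley ?lte_fin.
by rewrite -EFinM mulrA invfM mulrACA mulfV ?gt_eqF // mul1r.
Qed.

Lemma xlogxy_leDl a b c : 0 <= a -> 0 <= b -> (xlogxy c (a + b) <= xlogxy c b)%E.
Proof.
move=> a0 b0; rewrite /xlogxy; have [//|c_neq0] := eqVneq c 0.
have [_|b_neq0] := eqVneq b 0; first by case: ifP; rewrite ?leey.
have b_gt0 : 0 < b by rewrite lt_def b_neq0.
have ab_gt0 : 0 < a + b by rewrite ltr_wpDl.
rewrite (gt_eqF ab_gt0) lee_fin; have [c_lt0|c_ge0] := ltP c 0.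
  by rewrite !ln0 ?mulr0 // pmulr_lle0 ?invr_gt0 // ltW.
have c_gt0 : 0 < c by rewrite lt_def c_neq0.
by rewrite ler_pM2l // ler_ln ?posrE ?divr_gt0 // ler_pM2l // lef_pV2 ?posrE // lerDr.
Qed.

Lemma xlogxy_subadditive a b c d : 0 <= a -> 0 <= b -> 0 <= c -> 0 <= d ->
  (xlogxy (a + c) (b + d) <= xlogxy a b + xlogxy c d)%E.
Proof.
move=> a0 b0 c0 d0.
have [->|a_neq0] := eqVneq a 0; first by rewrite add0r {2}/xlogxy eqxx add0e xlogxy_leDl.
have [->|c_neq0] := eqVneq c 0.
  by rewrite addr0 {3}/xlogxy eqxx adde0 addrC xlogxy_leDl.
have [->|b_neq0] := eqVneq b 0.
  by rewrite {2}/xlogxy (negbTE a_neq0) eqxx addye ?leey // gt_eqF ?xlogxy_gtNy.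
have [->|d_neq0] := eqVneq d 0.
  by rewrite {3}/xlogxy (negbTE c_neq0) eqxx addey ?leey // gt_eqF ?xlogxy_gtNy.
rewrite /xlogxy !gt_eqF ?addr_gt0 ?lt_def ?a_neq0 ?b_neq0 ?c_neq0 ?d_neq0 //=.
by rewrite -EFinD lee_fin log_sum_ineq // lt_def ?a_neq0 ?b_neq0 ?c_neq0 ?d_neq0.
Qed.

Lemma xlogxy_convex t a b c d : 0 <= t <= 1 ->
  0 <= a -> 0 <= b -> 0 <= c -> 0 <= d ->
  (xlogxy (t * a + (1 - t) * c) (t * b + (1 - t) * d)
    <= t%:E * xlogxy a b + (1 - t)%:E * xlogxy c d)%E.
Proof.
move=> /andP[t0 t1] a0 b0 c0 d0; have t1' : 0 <= 1 - t by rewrite subr_ge0.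
by rewrite -!xlogxy_scale // xlogxy_subadditive // mulr_ge0.
Qed.

End entropy.

Section integral_lemmas.
Local Open Scope ereal_scope.
Context d (T : measurableType d) (R : realType) (mu : {measure set T -> \bar R}).
Import HBNNSimple.

(* Unlike [ge0_negligible_integral], [f] need not be measurable: we compare
   the suprema over simple functions defining both integrals directly. *)
Lemma ge0_negligible_integral_any (D N : set T) (f : T -> \bar R) :
  measurable N -> mu N = 0 -> (forall x, D x -> 0 <= f x) ->
  \int[mu]_(x in D) f x = \int[mu]_(x in D `\` N) f x.
Proof.
move=> mN N0 f0.
have f0' x : (D `\` N) x -> 0 <= f x by case=> /f0.
rewrite !ge0_integralE //; apply: le_anti; apply/andP; split; last first.
  apply: ereal_sup_le => _ [h hle <-]; exists h => // x.
  apply: le_trans (hle x) _; rewrite !patchE.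
  case: ifPn => [/set_mem [Dx _]|_]; first by rewrite mem_set.
  by case: ifPn => // /set_mem; exact: f0.
apply: ge_ereal_sup => _ [h hle <-].
pose hN := proj_nnsfun h (measurableC mN).
have hNE x : hN x = (h x * \1_(~` N) x)%R by [].
have -> : sintegral mu h = sintegral mu hN.
  have patchT (k : {nnsfun T >-> R}) : sintegral mu k = sintegral mu (k \_ setT).
    by rewrite patch_setT.
  rewrite patchT [RHS]patchT -!integral_nnsfun //.
  apply: ae_eq_integral => //; try exact/measurable_EFinP.
  exists N; split => // x /= hx; apply: contrapT => xN; apply: hx => _.
  by rewrite -[X in _ = X]/(hN x)%:E hNE indicE mem_set // mulr1.
apply: ereal_sup_ubound; exists hN => // x.
rewrite hNE indicE patchE; have [xN|xN] := boolP (x \in ~` N).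
  rewrite mulr1; apply: le_trans (hle x) _; rewrite patchE.
  case: ifPn => [Dx|_]; last by case: ifPn => // /set_mem; exact: f0'.
  by rewrite mem_set //; split; [exact: set_mem | move: xN; rewrite inE].
by rewrite mulr0; case: ifPn => // /set_mem; exact: f0'.
Qed.

Lemma ae_setD_null (D : set T) (P : T -> Prop) : {ae mu, forall x, D x -> P x} ->
  exists N, [/\ measurable N, mu N = 0 & forall x, (D `\` N) x -> P x].
Proof.
move=> [N [mN N0 sN]]; exists N; split => // x [Dx xN].
by apply: contrapT => nPx; apply: xN; apply: sN => /= /(_ Dx).
Qed.

Lemma ge0_le_integral_comb (D : set T) (f g h : T -> \bar R) (t : R) :
  measurable D -> (0 <= t <= 1)%R ->
  (forall x, D x -> 0 <= f x) -> (forall x, D x -> 0 <= g x) ->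
  (forall x, D x -> 0 <= h x) ->
  measurable_fun D f -> measurable_fun D g -> measurable_fun D h ->
  (forall x, D x -> h x <= t%:E * f x + (1 - t)%:E * g x) ->
  \int[mu]_(x in D) h x <=
    t%:E * \int[mu]_(x in D) f x + (1 - t)%:E * \int[mu]_(x in D) g x.
Proof.
move=> mD /andP[t0 t1] f0 g0 h0 mf mg mh hfg.
have t1' : (0 <= 1 - t)%R by rewrite subr_ge0.
rewrite -(ge0_integralZl_EFin _ mD f0 mf t0) -(ge0_integralZl_EFin _ mD g0 mg t1').
rewrite -ge0_integralD //; try exact: measurable_funeM.
- by apply: ge0_le_integral => //; apply: emeasurable_funD; exact: measurable_funeM.
- by move=> x Dx; rewrite mule_ge0 ?lee_fin ?f0.
- by move=> x Dx; rewrite mule_ge0 ?lee_fin ?g0.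
Qed.
End integral_lemmas.

Section real_measurability.
Variable R : realType.
Implicit Types (f : R -> R) (b p q x y : R).

Definition clamp b y := if y <= 0 then 0 else if y <= b then y else b.

Lemma clamp_id b y : 0 <= y <= b -> clamp b y = y.
Proof.
move=> /andP[y0 yb]; rewrite /clamp yb.
by case: ifPn => // y_le0; apply/eqP; rewrite eq_le y_le0 y0.
Qed.

Lemma clamp_contraction b p q : 0 <= b -> p <= q ->
  [/\ 0 <= clamp b p, clamp b p <= clamp b q, clamp b q <= b
    & clamp b q - clamp b p <= q - p].
Proof.
move=> b0 pq; rewrite /clamp.
by do 4?case: ifPn; rewrite -?ltNge => *; split; lra.
Qed.

Lemma abs_cont_clamp_continuous b f : 0 <= b -> abs_cont_on 0 b f ->
  continuous (f \o clamp b).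
Proof.
move=> b0 ac y; apply/cvgrPdist_lt => e e0.
have [d d0 H] := ac e e0.
have close p q : p <= q -> q - p < d -> `|f (clamp b q) - f (clamp b p)| < e.
  move=> pq qpd; have [c0 cpq cb cq] := clamp_contraction b0 pq.
  have := H 1%N (fun _ => clamp b p) (fun _ => clamp b q).
  rewrite !big_ord1; apply=> [_|k l|]; first by [].
    by rewrite !ord1 eqxx.
  lra.
apply/nbhs_ballP; exists d => //= z; rewrite /ball /= => yz_d.
have [yz|zy] := leP y z.
  by rewrite distrC; apply: close; move: yz_d; rewrite // distrC ger0_norm ?subr_ge0.
by apply: close (ltW zy) _; move: yz_d; rewrite ger0_norm // subr_ge0 ltW.
Qed.

Lemma clamp_difference_quotient_cvg b f x : 0 < x < b -> derivable f x 1 ->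
  (fun n => (f (clamp b (x + harmonic n)) - f (clamp b x)) / harmonic n) @ \oo
    --> derive1 f x.
Proof.
move=> /andP[x0 xb] df.
pose G h := h^-1 *: (f (h + x) - f x).
have G_cvg : G @ 0^' --> derive1 f x.
  have eG : (fun h => h^-1 *: ((f \o shift x) (h *: 1) - f x)) = G.
    by apply/funext => h; rewrite /= [h *: 1]mulr1.
  have : cvg (G @ 0^') by move: df; rewrite /derivable eG.
  exact.
have G_harmonic := (cvg_at_rightP G 0 _).1 (cvg_dnbhs_at_right G_cvg) harmonic
  (conj harmonic_gt0 cvg_harmonic).
apply: cvg_trans G_harmonic; apply: near_eq_cvg.
have bx : 0 < b - x by rewrite subr_gt0.
near=> n; have h0 := @harmonic_gt0 R n.
have hb : harmonic n < b - x by near: n; exact: cvgr_lt cvg_harmonic _ bx.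
have xh : 0 <= x + harmonic n <= b by apply/andP; split; lra.
have x0b : 0 <= x <= b by rewrite !ltW.
by rewrite !clamp_id // /G /= [x + _]addrC mulrC.
Unshelve. all: end_near.
Qed.

Lemma abs_cont_measurable_fun b f (D : set R) : 0 <= b -> abs_cont_on 0 b f ->
  D `<=` `[0, b] -> measurable_fun D f.
Proof.
move=> b0 ac sD; apply: (eq_measurable_fun (f \o clamp b)).
  by move=> x /set_mem/sD; rewrite /= in_itv /= => x0b; rewrite clamp_id.
exact: measurable_funS measurableT (subsetT D)
  (continuous_measurable_fun (abs_cont_clamp_continuous b0 ac)).
Qed.

Lemma abs_cont_measurable_derive1 b f (D : set R) : 0 <= b -> abs_cont_on 0 b f ->
  D `<=` `]0, b[ -> (forall x, D x -> derivable f x 1) ->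
  measurable_fun D (derive1 f).
Proof.
move=> b0 ac sD df.
have mf : measurable_fun setT (f \o clamp b).
  exact: continuous_measurable_fun (abs_cont_clamp_continuous b0 ac).
apply: (@measurable_fun_cvg _ _ _ _
  (fun n x => (f (clamp b (x + harmonic n)) - f (clamp b x)) / harmonic n)).
  move=> n; apply: measurable_funS measurableT (subsetT D) _.
  apply: measurable_funM => //; apply: measurable_funB => //.
  exact: measurableT_comp mf (measurable_funD _ _).
move=> x Dx; apply: clamp_difference_quotient_cvg (df x Dx).
by have := sD x Dx; rewrite /= in_itv.
Qed.

Lemma measurable_xlogxy (D : set R) (a c : R -> R) : measurable D ->
  measurable_fun D a -> measurable_fun D c ->
  (forall x, D x -> 0 <= a x) -> (forall x, D x -> 0 <= c x) ->
  measurable_fun D (fun x => xlogxy (a x) (c x)).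
Proof.
move=> mD ma mc a0 c0; rewrite /xlogxy.
have ma0 : measurable_fun D (fun x => a x == 0).
  exact: measurable_fun_eqr ma (measurable_cst _).
apply: measurable_fun_if => //.
set D1 := D `&` _; have sD1 : D1 `<=` D by exact: subIsetl.
have mD1 : measurable D1 by exact: ma0.
apply: measurable_fun_if => //.
  exact: measurable_fun_eqr (measurable_funS mD sD1 mc) (measurable_cst _).
set D2 := D1 `&` _; have sD2 : D2 `<=` D by move=> x [/sD1].
apply: (eq_measurable_fun (fun x => (a x * (ln (a x) - ln (c x)))%:E)).
  move=> x; rewrite inE => -[[Dx /= /negbT a_neq0] /= /negbT c_neq0].
  by rewrite ln_div // posrE lt_def ?a_neq0 ?c_neq0 ?a0 ?c0.
apply/measurable_EFinP; apply: measurable_funM; first exact: measurable_funS mD sD2 ma.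
by apply: measurable_funB; apply: measurableT_comp => //; exact: measurable_funS mD sD2 _.
Qed.

Lemma ae_interior b :
  {ae lebesgue_measure, forall x, x \in `[0, b] -> x \in `]0, b[}.
Proof.
exists ([set 0] `|` [set b]); split.
- by apply: measurableU; exact: measurable_set1.
- by rewrite measureU0 //; exact: lebesgue_measure_set1.
- move=> x /= /not_implyP[]; rewrite !in_itv /= => /andP[x0 xb].
  rewrite !lt_def x0 xb !andbT => /negP/nandP[/negPn/eqP -> | /negPn/eqP <-].
    by left.
  by right.
Qed.

End real_measurability.

Section occupancy.
Variables (R : realType) (I : nat).
Implicit Types (g : R -> 'I_I.+2 -> R) (a b : 'I_I.+2 -> R) (t x beta : R).

Lemma simplex_comb a b t : 0 <= t <= 1 -> simplex a -> simplex b ->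
  simplex (fun j => t * a j + (1 - t) * b j).
Proof.
move=> /andP[t0 t1] [a0 a1] [b0 b1]; split.
  by move=> j; rewrite addr_ge0 // mulr_ge0 // subr_ge0.
by rewrite big_split /= -!mulr_sumr a1 b1; ring.
Qed.

Definition regular_at g x :=
  (forall j, derivable (fun y => g y j) x 1) /\ simplex (rate g x).

Lemma rate_comb (g1 g2 : R -> 'I_I.+2 -> R) t x :
  (forall j, derivable (fun y => g1 y j) x 1) ->
  (forall j, derivable (fun y => g2 y j) x 1) ->
  rate (comb t g1 g2) x = fun j => t * rate g1 x j + (1 - t) * rate g2 x j.
Proof.
move=> d1 d2.
have theta_comb n : theta_nat (comb t g1 g2) x n =
    t * theta_nat g1 x n + (1 - t) * theta_nat g2 x n.
  rewrite /theta_nat; under eq_bigr => k _ do rewrite derive1_comb //.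
  by rewrite big_split /= -!mulr_sumr; ring.
apply/funext => j; rewrite /rate; case: ifP => _; first exact: theta_comb.
under eq_bigr => k _ do rewrite theta_comb.
by rewrite big_split /= -!mulr_sumr; ring.
Qed.

Lemma regular_at_comb (g1 g2 : R -> 'I_I.+2 -> R) t x : 0 <= t <= 1 ->
  regular_at g1 x -> regular_at g2 x -> regular_at (comb t g1 g2) x.
Proof.
move=> t01 [d1 s1] [d2 s2]; split; first by move=> j; exact: derivable_comb.
by rewrite rate_comb //; exact: simplex_comb.
Qed.

Lemma occ_set_comb alpha omega beta (g1 g2 : R -> 'I_I.+2 -> R) t : 0 <= t <= 1 ->
  occ_set alpha omega beta g1 -> occ_set alpha omega beta g2 ->
  occ_set alpha omega beta (comb t g1 g2).
Proof.
move=> t01 [[ac1 [s1 ae1]] [g10 g1b]] [[ac2 [s2 ae2]] [g20 g2b]].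
split; [split; [|split] | split].
- by move=> j; exact: abs_cont_on_comb.
- by move=> x x0b; apply: simplex_comb; [| exact: s1 | exact: s2].
- move: ae1 ae2; apply: (filterS2 (ae_filter_ringOfSetsType lebesgue_measure)).
  move=> x h1 h2 x0b.
  have [[d1 [m1 r1]] [d2 [m2 r2]]] := (h1 x0b, h2 x0b).
  have [dc rc] := regular_at_comb t01 (conj d1 r1) (conj d2 r2).
  split; [exact: dc | split; [|exact: rc]].
  by rewrite rate_comb // derive1_comb // m1 m2.
- by apply/funext => j; rewrite /comb g10 g20; ring.
- by apply/funext => j; rewrite /comb g1b g2b; ring.
Qed.

Lemma rate_sum1 g x : \sum_(j < I.+2) rate g x j = 1.
Proof.
rewrite big_ord_recr /= {2}/rate /= ltnn.
under eq_bigr => i _ do rewrite /rate /= -ltnS ltn_ord.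
by rewrite addrC subrK.
Qed.

Lemma relent_ge0 (th : 'I_I.+2 -> R) a :
  simplex a -> \sum_j th j = 1 -> (0 <= relent th a)%E.
Proof.
move=> [a0 a1] th1; apply: (@le_trans _ _ (\sum_(j < I.+2) (th j - a j)%:E)%E).
  by rewrite sumEFin sumrB th1 a1 subrr.
by apply: lee_sum => j _; exact: xlogxy_ge_sub.
Qed.

Lemma relent_convex t (th1 th2 : 'I_I.+2 -> R) a b : 0 <= t <= 1 ->
  (forall j, 0 <= th1 j) -> (forall j, 0 <= th2 j) ->
  (forall j, 0 <= a j) -> (forall j, 0 <= b j) ->
  (relent (fun j => t * th1 j + (1 - t) * th2 j)%R (fun j => t * a j + (1 - t) * b j)%R
    <= t%:E * relent th1 a + (1 - t)%:E * relent th2 b)%E.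
Proof.
move=> t01 th10 th20 a0 b0; rewrite /relent.
have xlogxy_adde_def i j (u v : 'I_I.+2 -> R) :
    (xlogxy (u i) (v i) +? xlogxy (u j) (v j))%E.
  by apply: ltninfty_adde_def; rewrite inE xlogxy_gtNy.
rewrite !fin_num_sume_distrr // -big_split /=.
by apply: lee_sum => j _; exact: xlogxy_convex.
Qed.

Lemma measurable_relent_rate beta g (D : set R) : 0 <= beta ->
  (forall j, abs_cont_on 0 beta (fun y => g y j)) -> measurable D ->
  D `<=` `]0, beta[ -> (forall x, D x -> simplex (g x) /\ regular_at g x) ->
  measurable_fun D (fun x => relent (rate g x) (g x)).
Proof.
move=> b0 ac mD sD reg.
have sD' : D `<=` `[0, beta] by move=> x /sD; apply: subset_itv_oo_cc.
have mg j : measurable_fun D (fun x => g x j).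
  exact: abs_cont_measurable_fun b0 (ac j) sD'.
have mth n : measurable_fun D (fun x => theta_nat g x n).
  rewrite /theta_nat; apply: measurable_funN.
  under eq_fun do rewrite big_mkcond /=.
  apply: measurable_sum => k; case: leqP => _; last exact: measurable_cst.
  by apply: abs_cont_measurable_derive1 b0 (ac k) sD _ => x /reg [_ []].
have mrate j : measurable_fun D (fun x => rate g x j).
  rewrite /rate; case: leqP => _; first exact: mth.
  by apply: measurable_funB; [exact: measurable_cst | exact: measurable_sum].
apply: emeasurable_sum => j; apply: measurable_xlogxy => // x /reg.
  by case=> _ [_ [+ _]]; apply.
by case=> [[+ _] _]; apply.
Qed.

Lemma relent_rate_ge0 g x : simplex (g x) -> (0 <= relent (rate g x) (g x))%E.
Proof. by move=> sg; apply: relent_ge0 sg (rate_sum1 g x). Qed.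

Lemma Jcost_setD_null beta g (N : set R) :
  measurable N -> lebesgue_measure N = 0%E ->
  (forall x, x \in `[0, beta] -> simplex (g x)) ->
  Jcost beta g =
    (\int[lebesgue_measure]_(x in `[0%R, beta] `\` N) relent (rate g x) (g x))%E.
Proof.
move=> mN N0 sg; rewrite /Jcost.
rewrite (@ge0_negligible_integral_any _ _ _ lebesgue_measure _ _ _ mN N0) //.
by move=> x /sg; exact: relent_rate_ge0.
Qed.

Lemma Jcost_convex beta (g1 g2 : R -> 'I_I.+2 -> R) t : 0 <= beta -> 0 <= t <= 1 ->
  valid_occupancy beta g1 -> valid_occupancy beta g2 ->
  (Jcost beta (comb t g1 g2) <= t%:E * Jcost beta g1 + (1 - t)%:E * Jcost beta g2)%E.
Proof.
move=> b0 t01 [ac1 [s1 ae1]] [ac2 [s2 ae2]].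
have sc x : x \in `[0, beta] -> simplex (comb t g1 g2 x).
  by move=> xb; apply: simplex_comb (s1 x xb) (s2 x xb).
have ae_good : {ae lebesgue_measure, forall x, `[0, beta]%classic x ->
    [/\ x \in `]0, beta[, regular_at g1 x & regular_at g2 x]}.
  move: (ae_interior beta) ae1 ae2.
  apply: (filterS3 (ae_filter_ringOfSetsType lebesgue_measure)) => x x0b h1 h2 xb.
  by have [[d1 [_ r1]] [d2 [_ r2]]] := (h1 xb, h2 xb); split; [exact: x0b | |].
have [N [mN N0 good]] := ae_setD_null ae_good.
rewrite !(Jcost_setD_null mN N0) //.
set D := `[0, beta] `\` N.
have mD : measurable D by apply: measurableD => //; exact: measurable_itv.
have sDo : D `<=` `]0, beta[ by move=> x /good [].
have integrand_ge0 g : (forall x, x \in `[0, beta] -> simplex (g x)) ->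
    forall x, D x -> (0 <= relent (rate g x) (g x))%E.
  by move=> sg x [/sg sgx _]; exact: relent_rate_ge0.
apply: (@ge0_le_integral_comb _ _ _ lebesgue_measure _ _ _ _ _ mD t01);
  try exact: integrand_ge0.
- apply: measurable_relent_rate b0 ac1 mD sDo _ => x Dx.
  by have [_ r1 _] := good x Dx; split=> //; apply: s1; case: Dx.
- apply: measurable_relent_rate b0 ac2 mD sDo _ => x Dx.
  by have [_ _ r2] := good x Dx; split=> //; apply: s2; case: Dx.
- apply: measurable_relent_rate b0 _ mD sDo _ => [j|x Dx].
    exact: abs_cont_on_comb t01 (ac1 j) (ac2 j).
  have [_ r1 r2] := good x Dx.
  by split; [apply: sc; case: Dx | exact: regular_at_comb].
move=> x Dx; have [_ [d1 [r1 _]] [d2 [r2 _]]] := good x Dx.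
have [xb _] := Dx.
rewrite rate_comb //; apply: relent_convex => // j.
- by case: (s1 x xb) => + _; apply.
- by case: (s2 x xb) => + _; apply.
Qed.

End occupancy.

Theorem lemmaA15 (R : realType) (I : nat) (alpha omega : 'I_I.+2 -> R) (beta : R) :
  0 < beta ->
  simplex alpha -> simplex omega ->
  feasible alpha omega beta ->
  (forall (g1 g2 : R -> 'I_I.+2 -> R) (t : R),
      occ_set alpha omega beta g1 -> occ_set alpha omega beta g2 ->
      0 <= t <= 1 -> occ_set alpha omega beta (comb t g1 g2)) /\
  (forall (g1 g2 : R -> 'I_I.+2 -> R) (t : R),
      occ_set alpha omega beta g1 -> occ_set alpha omega beta g2 ->
      0 <= t <= 1 ->
      (Jcost beta (comb t g1 g2) <= t%:E * Jcost beta g1 + (1 - t)%:E * Jcost beta g2)%E).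
Proof.
move=> beta_gt0 _ _ _; split=> g1 g2 t occ1 occ2 t01; first exact: occ_set_comb.
exact: Jcost_convex (ltW beta_gt0) t01 occ1.1 occ2.1.
Qed.
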